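(* For every set $M$ of $m$ items, every integer $n\ge 1$, and every normalized monotone valuation $v:2^M\to\mathbb{R}_{\ge 0}$, we have $\mathrm{RMMS}(M,v,n)\ \ge\ \mathrm{MXS}(M,v,n)$.
   Context: Items: a finite set $M=\{e_1,\dots,e_m\}$; there are $n$ agents. A valuation is a function $v:2^M\to\mathbb{R}$ that is normalized ($v(\emptyset)=0$) and monotone ($v(S)\le v(T)$ whenever $S\subseteq T\subseteq M$). For $S\subseteq M$ and $e\in S$, $S-e$ denotes $S\setminus\{e\}$. An allocation is a partition $A_1,\dots,A_n$ of $M$ (parts may be empty), with $A_i$ given to agent $a_i$. Residual maximin share: $\mathrm{RMMS}(M,v,n)$ is the largest real $t$ with the following property: for every $0\le k<n$ and every $k$ pairwise disjoint bundles $B_1,\dots,B_k\subseteq M$ with $v(B_j)<t$ for all $j$, the set $M\setminus(B_1\cup\dots\cup B_k)$ can be partitioned into $n-k$ bundles each of value (under $v$) at least $t$. MXS: for an agent $a_i$ with valuation $v_i$, $\mathrm{MXS}(M,v_i,n)$ is the minimum of $v_i(S)$ over all bundles $S\subseteq M$ for which there exists an allocation $A_1,\dots,A_n$ with $A_i=S$ such that for every $j$ and every $e\in A_j$, $v_i(S)\ge v_i(A_j-e)$ (i.e. $a_i$ has no EFX envy towards any agent). *)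

From HB Require Import structures.
From mathcomp Require Import all_boot all_order all_algebra.
From mathcomp Require Import classical_sets reals.
Set Implicit Arguments. Unset Strict Implicit. Unset Printing Implicit Defensive.
Import Order.TTheory GRing.Theory Num.Theory.
Local Open Scope ring_scope.

(* Items: the finite type T; the set of all items is M = [set: T]. *)
Section Defs.
Variables (R : realType) (T : finType).

Definition normalized (v : {set T} -> R) : Prop := v (@finset.set0 T) = 0.
Definition monotone_val (v : {set T} -> R) : Prop :=
  forall S U : {set T}, S \subset U -> v S <= v U.
Definition nonneg_val (v : {set T} -> R) : Prop := forall S, 0 <= v S.

Definition is_partition (X : {set T}) (p : nat) (A : 'I_p -> {set T}) : Prop :=
  (forall j1 j2 : 'I_p, j1 != j2 -> [disjoint A j1 & A j2]) /\
  \bigcup_(j < p) A j = X.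

Definition rmms_prop (v : {set T} -> R) (n : nat) (t : R) : Prop :=
  forall (k : nat), (k < n)%N ->
  forall B : 'I_k -> {set T},
    (forall j1 j2 : 'I_k, j1 != j2 -> [disjoint B j1 & B j2]) ->
    (forall j, v (B j) < t) ->
    exists A : 'I_(n - k) -> {set T},
      is_partition (~: \bigcup_(j < k) B j) A /\ (forall j, t <= v (A j)).

Definition RMMS (v : {set T} -> R) (n : nat) : R :=
  sup [set t | rmms_prop v n t].

(* S is a bundle of agent i in some allocation where i has no EFX envy. *)
Definition mxs_feasible (v : {set T} -> R) (n : nat) (i : 'I_n) (S : {set T})
  : Prop :=
  exists A : 'I_n -> {set T},
    is_partition [set: T] A /\ A i = S /\
    (forall (j : 'I_n) (e : T), e \in A j -> v (A j :\ e) <= v S).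

Definition MXS (v : {set T} -> R) (n : nat) (i : 'I_n) : R :=
  inf (classical_sets.image [set S | mxs_feasible v i S] v).

End Defs.

(* Fix a threshold t = MXS and residual bundles B_1, ..., B_k each worth less
   than t. With a single valuation, every set admits a partition into any
   positive number of bundles that is EFX with respect to v: moving an item
   e from a bundle Y to a bundle S with v S < v (Y - e) strictly decreases
   the potential sum_j 2^(K - key A_j), where key encodes the pair
   (v A_j, #|A_j|) lexicographically and K bounds key. Partition the
   complement of the B_j this way. If some bundle A_s were worth less than
   t, consider the allocation B ++ A and hand agent i the most valuable
   bundle G worth less than t: bundles below t are worth at most v G, and
   for a bundle A_b worth at least t, removing any item leaves at most
   v A_s <= v G by the EFX property. So i has no EFX envy, whence
   MXS <= v G < t, a contradiction. *)
From HB Require Import structures.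
From mathcomp Require Import all_boot all_order all_algebra.
From mathcomp Require Import classical_sets reals.
From mathcomp Require Import perm zify.
Set Implicit Arguments. Unset Strict Implicit. Unset Printing Implicit Defensive.
Import Order.TTheory GRing.Theory Num.Theory.
Local Open Scope ring_scope.

Section Partition.
Variable T : finType.

Lemma is_partitionP (X : {set T}) (p : nat) (A : 'I_p -> {set T}) :
  (forall x j, x \in A j -> x \in X) ->
  (forall x, x \in X -> exists j, x \in A j) ->
  (forall x j1 j2, x \in A j1 -> x \in A j2 -> j1 = j2) ->
  is_partition X A.
Proof.
move=> subX coverX uniqA; split.
  move=> j1 j2 j12; rewrite -setI_eq0; apply/eqP/setP => x; rewrite !inE.
  by apply/negP => /andP[x1 x2]; move: j12; rewrite (uniqA _ _ _ x1 x2) eqxx.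
apply/setP => x; apply/bigcupP/idP => [[j _ /subX] //|/coverX[j xj]].
by exists j.
Qed.

Section Properties.
Variables (X : {set T}) (p : nat) (A : 'I_p -> {set T}).
Hypothesis partA : is_partition X A.

Lemma partition_sub x j : x \in A j -> x \in X.
Proof. by case: partA => _ <- xj; apply/bigcupP; exists j. Qed.

Lemma partition_cover x : x \in X -> exists j, x \in A j.
Proof. by case: partA => _ <- /bigcupP[j _ xj]; exists j. Qed.

Lemma partition_uniq x j1 j2 : x \in A j1 -> x \in A j2 -> j1 = j2.
Proof.
case: partA => disjA _ x1 x2; apply/eqP; apply: contraT => /disjA.
by move/disjointFr/(_ x1); rewrite x2.
Qed.

Lemma partition_comp q (f : 'I_q -> 'I_p) :
  bijective f -> is_partition X (A \o f).
Proof.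
move=> bij_f; apply: is_partitionP => [x j|x /partition_cover[j xj]|x j1 j2].
- exact: partition_sub.
- by case: bij_f => g fK gK; exists (g j); rewrite /= gK.
- by move=> x1 x2; apply: (bij_inj bij_f); apply: partition_uniq x1 x2.
Qed.

End Properties.

Definition cat_bundles k m (B : 'I_k -> {set T}) (A : 'I_m -> {set T})
  (j : 'I_(k + m)) : {set T} :=
  match split j with inl a => B a | inr b => A b end.

Lemma cat_bundles_unsplit k m (B : 'I_k -> {set T}) (A : 'I_m -> {set T}) u :
  cat_bundles B A (unsplit u) = match u with inl a => B a | inr b => A b end.
Proof. by rewrite /cat_bundles unsplitK. Qed.

Lemma partition_cat (X Y : {set T}) k m (B : 'I_k -> {set T})
    (A : 'I_m -> {set T}) :
  [disjoint X & Y] -> is_partition X B -> is_partition Y A ->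
  is_partition (X :|: Y) (cat_bundles B A).
Proof.
move=> disjXY partB partA.
apply: is_partitionP => [x j|x|x j1 j2].
- rewrite -(splitK j) cat_bundles_unsplit inE.
  by case: split => [a /(partition_sub partB)|b /(partition_sub partA)] ->;
    rewrite ?orbT.
- case/setUP => [/(partition_cover partB)[a xa]|/(partition_cover partA)[b xb]].
    by exists (unsplit (inl a)); rewrite cat_bundles_unsplit.
  by exists (unsplit (inr b)); rewrite cat_bundles_unsplit.
- rewrite -(splitK j1) -(splitK j2) !cat_bundles_unsplit.
  case: (split j1) (split j2) => [a1|b1] [a2|b2] x1 x2.
  + by rewrite (partition_uniq partB x1 x2).
  + have := partition_sub partA x2.
    by rewrite (disjointFr disjXY (partition_sub partB x1)).
  + have := partition_sub partA x1.
    by rewrite (disjointFr disjXY (partition_sub partB x2)).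
  + by rewrite (partition_uniq partA x1 x2).
Qed.

Lemma partition_cat_residual k m (B : 'I_k -> {set T}) (A : 'I_m -> {set T}) :
  (forall j1 j2, j1 != j2 -> [disjoint B j1 & B j2]) ->
  is_partition (~: \bigcup_(j < k) B j) A ->
  is_partition [set: T] (cat_bundles B A).
Proof.
move=> disjB partA; rewrite -(finset.setUCr (\bigcup_(j < k) B j)).
apply: partition_cat partA => //.
by rewrite finset.disjoints_subset finset.setCK.
Qed.

Lemma exists_partition (X : {set T}) p :
  (0 < p)%N -> exists A : 'I_p -> {set T}, is_partition X A.
Proof.
move=> p_gt0; pose j0 := Ordinal p_gt0.
exists (fun j => if j == j0 then X else finset.set0).
apply: is_partitionP => [x j|x Xx|x j1 j2]; first by case: ifP; rewrite ?inE.
  by exists j0; rewrite eqxx.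
by do 2 case: eqP => [->|_]; rewrite ?inE.
Qed.

Definition move_item p (A : 'I_p -> {set T}) (s : 'I_p) (e : T) (j : 'I_p) :=
  if j == s then e |: A j else A j :\ e.

Lemma in_move_item p (A : 'I_p -> {set T}) s e x j :
  (x \in move_item A s e j) = if x == e then j == s else x \in A j.
Proof.
rewrite /move_item; case: (eqVneq j s) => [->|js]; case: (eqVneq x e) => [->|xe];
  by rewrite !inE ?eqxx ?(negbTE js) ?(negbTE xe).
Qed.

Lemma move_item_notin p (A : 'I_p -> {set T}) s e j :
  j != s -> e \notin A j -> move_item A s e j = A j.
Proof.
move=> js eNA; apply/setP => x; rewrite in_move_item (negbTE js).
by case: eqVneq => // ->; rewrite (negbTE eNA).
Qed.

Lemma partition_move_item (X : {set T}) p (A : 'I_p -> {set T}) s e :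
  e \in X -> is_partition X A -> is_partition X (move_item A s e).
Proof.
move=> Xe partA.
apply: is_partitionP => [x j|x Xx|x j1 j2]; rewrite ?in_move_item.
all: case: (eqVneq x e) => [xe|xe].
- by rewrite xe.
- exact: (partition_sub partA).
- by exists s; rewrite in_move_item xe eqxx.
- have [j xj] := partition_cover partA Xx.
  by exists j; rewrite in_move_item (negbTE xe).
- by move=> /eqP-> /eqP->.
- exact: (partition_uniq partA).
Qed.

End Partition.

Lemma leq_pow2_sub_add (K a b c : nat) :
  (a <= K -> b <= K -> c < a -> c < b ->
   2 ^ (K - a) + 2 ^ (K - b) <= 2 ^ (K - c))%N.
Proof.
move=> aK bK ca cb; have -> : (K - c = (K - c).-1.+1)%N by lia.
rewrite expnS mul2n -addnn leq_add // leq_pexp2l //; lia.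
Qed.

Section EFX.
Variables (R : realType) (T : finType) (v : {set T} -> R).

Definition efx p (A : 'I_p -> {set T}) : bool :=
  [forall s, forall y, forall e in A y, v (A y :\ e) <= v (A s)].

Lemma efxP p (A : 'I_p -> {set T}) :
  reflect (forall s y e, e \in A y -> v (A y :\ e) <= v (A s)) (efx A).
Proof.
apply: (iffP forallP) => [efxA s y e ey|efxA s].
  by have /forallP/(_ y)/forall_inP/(_ e ey) := efxA s.
by apply/forallP => y; apply/forall_inP => e; apply: efxA.
Qed.

Lemma efxPn p (A : 'I_p -> {set T}) :
  ~~ efx A -> exists s y e, e \in A y /\ v (A s) < v (A y :\ e).
Proof.
move=> /forallPn[s /forallPn[y /forall_inPn[e ey]]].
by exists s, y, e; rewrite ltNge.
Qed.

Definition vrank (Z : {set T}) : nat := #|[set U | v U < v Z]|.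

Lemma ltn_vrank Z1 Z2 : (vrank Z1 < vrank Z2)%N = (v Z1 < v Z2).
Proof.
apply/idP/idP => [|lt12]; last first.
  apply: proper_card; apply/properP; split; last by exists Z1; rewrite !inE ?ltxx.
  by apply/fintype.subsetP => U; rewrite !inE => /lt_trans; apply.
apply: contraTT; rewrite -leNgt -leqNgt => le21.
apply: subset_leq_card; apply/fintype.subsetP => U.
by rewrite !inE => /lt_le_trans; apply.
Qed.

Lemma leq_vrank Z1 Z2 : (vrank Z1 <= vrank Z2)%N = (v Z1 <= v Z2).
Proof. by rewrite leqNgt ltn_vrank -leNgt. Qed.

(* Lexicographic encoding of the pair (v Z, #|Z|). *)
Definition efx_key (Z : {set T}) : nat := (vrank Z * #|T|.+1 + #|Z|)%N.
Definition efx_key_max : nat := (#|{set T}| * #|T|.+1 + #|T|)%N.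

Lemma efx_key_le_max Z : (efx_key Z <= efx_key_max)%N.
Proof. by rewrite leq_add ?leq_mul ?max_card. Qed.

Lemma efx_key_lt Z1 Z2 : v Z1 < v Z2 -> (efx_key Z1 < efx_key Z2)%N.
Proof.
rewrite -ltn_vrank /efx_key => lt12; have := max_card Z1.
have : ((vrank Z1).+1 * #|T|.+1 <= vrank Z2 * #|T|.+1)%N.
  by rewrite leq_mul2r lt12 orbT.
lia.
Qed.

Hypothesis vmono : monotone_val v.

Lemma efx_key_setU1 (Z : {set T}) e :
  e \notin Z -> (efx_key Z < efx_key (e |: Z))%N.
Proof.
move=> eNZ; rewrite /efx_key cardsU1 eNZ.
have : (vrank Z * #|T|.+1 <= vrank (e |: Z) * #|T|.+1)%N.
  by rewrite leq_mul2r leq_vrank vmono ?orbT // finset.subsetUr.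
lia.
Qed.

Definition efx_weight (Z : {set T}) : nat := 2 ^ (efx_key_max - efx_key Z).

Lemma efx_weight_move (S Y : {set T}) e : e \notin S -> v S < v Y ->
  (efx_weight (e |: S) + efx_weight Y <= efx_weight S)%N.
Proof.
move=> eNS lt_SY; apply: leq_pow2_sub_add; rewrite ?efx_key_le_max //.
  exact: efx_key_setU1.
exact: efx_key_lt.
Qed.

Definition efx_potential p (A : 'I_p -> {set T}) : nat :=
  (\sum_(j < p) efx_weight (A j))%N.

Lemma efx_potential_move_item (X : {set T}) p (A : 'I_p -> {set T}) s y e :
  is_partition X A -> e \in A y -> v (A s) < v (A y :\ e) ->
  (efx_potential (move_item A s e) < efx_potential A)%N.
Proof.
move=> partA ey lt_sy.
have sy : s != y.
  by apply: contraTneq lt_sy => ->; rewrite -leNgt vmono // finset.subD1set.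
have ys : y != s by rewrite eq_sym.
have eNA j : j != y -> e \notin A j.
  by apply: contra => ej; rewrite (partition_uniq partA ej ey).
rewrite /efx_potential (bigD1 s) //= (bigD1 y) //=.
rewrite [X in (_ < X)%N](bigD1 s) //= [in X in (_ < X)%N](bigD1 y) //=.
rewrite (eq_bigr (efx_weight \o A)) => [|j /andP[js jy]]; last first.
  by rewrite /= move_item_notin ?eNA.
rewrite /move_item eqxx (negbTE ys) !addnA ltn_add2r.
apply: leq_ltn_trans (efx_weight_move (eNA s sy) lt_sy) _.
by rewrite -[X in (X < _)%N]addn0 ltn_add2l expn_gt0.
Qed.

Lemma exists_efx_partition (X : {set T}) p :
  (0 < p)%N -> exists2 A : 'I_p -> {set T}, is_partition X A & efx A.
Proof.
move=> /(exists_partition X)[A0 partA0].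
have [N] := ubnP (efx_potential A0); elim: N A0 partA0 => // N IH A partA ltAN.
have [efxA|/efxPn[s [y [e [ey lt_sy]]]]] := boolP (efx A); first by exists A.
apply: (IH (move_item A s e)).
  exact: partition_move_item (partition_sub partA ey) partA.
exact: leq_trans (efx_potential_move_item partA ey lt_sy) ltAN.
Qed.

End EFX.

Section MXS.
Variables (R : realType) (T : finType) (v : {set T} -> R) (n : nat) (i : 'I_n).
Hypotheses (vmono : monotone_val v) (vnneg : nonneg_val v).

Lemma MXS_le_feasible S : mxs_feasible v i S -> MXS v i <= v S.
Proof.
move=> feasS; apply: (ge_inf _ (ex_intro2 _ _ S feasS erefl)).
by exists 0 => _ [U _ <-].
Qed.

Lemma mxs_feasible_partition (G : 'I_n -> {set T}) w :
  is_partition [set: T] G ->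
  (forall j e, e \in G j -> v (G j :\ e) <= v (G w)) ->
  mxs_feasible v i (G w).
Proof.
move=> partG noenvy; exists (G \o tperm i w); split; last split.
- apply: (partition_comp (f := tperm i w) partG).
  by exists (tperm i w) => j; rewrite tpermK.
- by rewrite /= tpermL.
- by move=> j e; apply: noenvy.
Qed.

Lemma feasible_below_threshold (G : 'I_n -> {set T}) (t : R) s :
  is_partition [set: T] G -> v (G s) < t ->
  (forall j e, t <= v (G j) -> e \in G j -> v (G j :\ e) <= v (G s)) ->
  exists2 S, mxs_feasible v i S & v S < t.
Proof.
move=> partG lt_st efxG.
case: (@arg_maxP _ _ _ s (fun j => v (G j) < t) (fun j => v (G j)) lt_st)
  => w lt_wt max_w.
exists (G w) => //; apply: mxs_feasible_partition partG _ => j e ej.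
have [lt_jt|le_tj] := ltP (v (G j)) t.
  exact: le_trans (vmono (finset.subD1set _ _)) (max_w j lt_jt).
exact: le_trans (efxG j e le_tj ej) (max_w s lt_st).
Qed.

Lemma MXS_le_residual_efx k (B : 'I_k -> {set T}) (A : 'I_(n - k) -> {set T}) :
  (k <= n)%N -> (forall j1 j2, j1 != j2 -> [disjoint B j1 & B j2]) ->
  (forall j, v (B j) < MXS v i) ->
  is_partition (~: \bigcup_(j < k) B j) A -> efx v A ->
  forall s, MXS v i <= v (A s).
Proof.
move=> le_kn disjB ltB partA /efxP efxA s; rewrite leNgt; apply/negP => lt_s.
have kn : (k + (n - k) = n)%N by rewrite subnKC.
pose G j := cat_bundles B A (cast_ord (esym kn) j).
have GE j : G (cast_ord kn j) = cat_bundles B A j by rewrite /G cast_ordK.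
have partG : is_partition [set: T] G.
  have partBA : is_partition [set: T] (cat_bundles B A).
    rewrite -(finset.setUCr (\bigcup_(j < k) B j)); apply: partition_cat partA.
      by rewrite finset.disjoints_subset finset.setCK.
    by split.
  apply: (partition_comp (f := cast_ord (esym kn)) partBA).
  by exists (cast_ord kn) => j; rewrite (cast_ordK, cast_ordKV).
have Gs : G (cast_ord kn (unsplit (inr s))) = A s.
  by rewrite GE cat_bundles_unsplit.
have [S feasS] : exists2 S, mxs_feasible v i S & v S < MXS v i.
  apply: (feasible_below_threshold partG (s := cast_ord kn (unsplit (inr s))));
    rewrite Gs // => j e.
  rewrite -[j](cast_ordKV kn) GE -(splitK (cast_ord _ j)) cat_bundles_unsplit.
  by case: split => [a|b]; [rewrite leNgt ltB | move=> _; apply: efxA].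
by rewrite ltNge MXS_le_feasible.
Qed.

End MXS.

Lemma rmms_prop_le_total (R : realType) (T : finType) (v : {set T} -> R) n t :
  (0 < n)%N -> monotone_val v -> rmms_prop v n t -> t <= v [set: T].
Proof.
move=> n_gt0 vmono rmms_t.
have [||A [_ leA]] := rmms_t 0%N n_gt0 (fun _ : 'I_0 => finset.set0); try by case.
have n0_gt0 : (0 < n - 0)%N by rewrite subn0.
exact: le_trans (leA (Ordinal n0_gt0)) (vmono _ _ (finset.subsetT _)).
Qed.

Theorem mainTheorem1 (R : realType) (T : finType) (n : nat) (hn : (1 <= n)%N)
  (v : {set T} -> R) (i : 'I_n) :
  normalized v -> monotone_val v -> nonneg_val v ->
  MXS v i <= RMMS v n.
Proof.
move=> _ vmono vnneg.
have ub_rmms : has_ubound [set t | rmms_prop v n t].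
  by exists (v [set: T]) => t; apply: rmms_prop_le_total.
apply: (ub_le_sup ub_rmms) => k lt_kn B disjB ltB.
have [A partA efxA] : exists2 A : 'I_(n - k) -> {set T},
    is_partition (~: \bigcup_(j < k) B j) A & efx v A.
  by apply: (exists_efx_partition vmono); rewrite subn_gt0.
exists A; split=> // s.
by apply: (MXS_le_residual_efx vmono vnneg (ltnW lt_kn) disjB).
Qed.
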